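(* Let $(R,\mathfrak{m})$ be a commutative Artinian local ring with identity, $\mathfrak{m}\neq0$ and $\mathfrak{m}^2=0$. In $R[x]$: $L(x)=\{1\}$, $L(x^2)=\{2\}$, $L(x^3)=\{3\}$, $L(x^4)=\{2,4\}$, and $L(x^5)=\{3,5\}$.
   Context: A nonunit polynomial in $R[x]$ is irreducible if in any factorization into two polynomials one factor is a unit of $R[x]$. A positive integer $k$ is a length of $f$ if $f$ is a product of $k$ irreducible polynomials of $R[x]$; $L(f)$ denotes the set of lengths of $f$. *)

From HB Require Import structures.
From mathcomp Require Import all_boot all_order all_algebra.
Set Implicit Arguments. Unset Strict Implicit. Unset Printing Implicit Defensive.
Import GRing.Theory.
Local Open Scope ring_scope.

Definition is_ideal (R : comNzRingType) (I : R -> Prop) : Prop :=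
  I 0 /\ (forall a b, I a -> I b -> I (a + b)) /\ (forall r a, I a -> I (r * a)).

Definition unique_maximal_ideal (R : comNzRingType) (m : R -> Prop) : Prop :=
  is_ideal m /\ ~ m 1 /\
  (forall I : R -> Prop, is_ideal I -> ~ I 1 -> forall x, I x -> m x).

Definition artinian (R : comNzRingType) : Prop :=
  forall I : nat -> R -> Prop,
    (forall n, is_ideal (I n)) ->
    (forall n x, I n.+1 x -> I n x) ->
    exists N, forall n, (N <= n)%N -> forall x, I n x <-> I N x.

Definition poly_unit (R : comNzRingType) (f : {poly R}) : Prop :=
  exists g : {poly R}, f * g = 1.

Definition poly_irreducible (R : comNzRingType) (f : {poly R}) : Prop :=
  ~ poly_unit f /\
  (forall g h : {poly R}, f = g * h -> poly_unit g \/ poly_unit h).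

Definition is_length (R : comNzRingType) (f : {poly R}) (k : nat) : Prop :=
  (0 < k)%N /\
  exists s : seq {poly R},
    size s = k /\ (forall g, g \in s -> poly_irreducible g) /\
    \prod_(g <- s) g = f.

(* Work modulo m.  As R is local, a factor of x^n in R[x] reduces to a unit
   times x^a in (R/m)[x]; call a its residue degree.  Because m^2 = 0, such a
   polynomial is a unit iff a = 0, and it is irreducible iff a = 1 or its
   constant term is nonzero: otherwise it either splits off the factor x, or it
   splits into two factors with constant terms in m, whose product is 0.
   In a factorization of x^n into irreducibles the residue degrees sum to n,
   and a largest one exceeding 1 occurs at least twice.  Indeed, if g alone had
   the largest residue degree K + 1, then, again because m^2 = 0, the product Q
   of the other factors would have no terms of degree below B - K, where B is
   its residue degree; the coefficient of x^B in gQ = x^n would then be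
   g(0) Q_B, which is nonzero as Q_B is a unit.  For n <= 5 this leaves the
   residue degrees (1,...,1), (2,2) and (2,2,1), all realized since
   x^4 = (x^2 + a)(x^2 - a) for 0 <> a in m. *)

From Pilot Require Import Defs.
From mathcomp Require Import all_boot all_order all_algebra.
From mathcomp Require Import boolp zify.
Import GRing.Theory.
Import Pilot.Defs.
Set Implicit Arguments. Unset Strict Implicit. Unset Printing Implicit Defensive.

Lemma exists_argmax_seq (T : eqType) (s : seq T) (f : T -> nat) x :
  x \in s -> exists2 y, y \in s & {in s, forall z, f z <= f y}.
Proof.
elim: s x => // y [_ x|z s IH x _]; rewrite ?inE.
  by move=> _; exists y => [|w]; rewrite inE // => /eqP ->.
have [w ws w_max] := IH z (mem_head z s).
have [le_yw|le_wy] := leqP (f y) (f w).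
  by exists w => [|v]; rewrite inE ?ws ?orbT // => /orP[/eqP ->|/w_max].
exists y => [|v]; first exact: mem_head.
rewrite inE => /orP[/eqP ->//|/w_max le_vw]; exact: leq_trans le_vw (ltnW le_wy).
Qed.

Lemma sum_count_geq (T : Type) (s : seq T) (f : T -> nat) M :
  all (fun x => 0 < f x) s ->
  M.-1 * count (fun x => M <= f x) s + size s <= \sum_(x <- s) f x.
Proof.
elim: s => [|x s IH] /=; first by rewrite big_nil muln0.
move=> /andP[fx_gt0 /IH]; rewrite big_cons; case: leqP => /= Mfx; nia.
Qed.

Lemma sum_leq_size_mul (T : Type) (s : seq T) (f : T -> nat) M :
  all (fun x => f x <= M) s -> \sum_(x <- s) f x <= size s * M.
Proof.
elim: s => [|x s IH] /=; first by rewrite big_nil.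
by move=> /andP[fx /IH]; rewrite big_cons mulSn; apply: leq_add.
Qed.

Lemma sum_repeated_max (T : eqType) (s : seq T) (f : T -> nat) :
  all (fun x => 0 < f x) s ->
  {in s, forall x, 1 < f x -> has (fun y => f x <= f y) (rem x s)} ->
  size s = \sum_(x <- s) f x \/
  exists2 M, 1 < M &
    (2 * M + size s <= \sum_(x <- s) f x + 2) && (\sum_(x <- s) f x <= size s * M).
Proof.
move=> f_gt0 max_repeated.
have [all_le1|/allPn[x xs]] := boolP (all (fun x => f x <= 1) s).
  left; rewrite -sum1_size !big_seq; apply: eq_bigr => x xs.
  by have := allP f_gt0 x xs; have := allP all_le1 x xs; lia.
rewrite -ltnNge => fx_gt1.
have [y ys y_max] := exists_argmax_seq f xs.
have fy_gt1 : 1 < f y := leq_trans fx_gt1 (y_max x xs).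
right; exists (f y) => //; apply/andP; split.
  have : 1 < count (fun z => f y <= f z) s.
    by rewrite (permP (perm_to_rem ys)) /= leqnn add1n ltnS -has_count max_repeated.
  have := sum_count_geq (f y) f_gt0; nia.
by apply: sum_leq_size_mul; apply/allP => z; apply: y_max.
Qed.

Local Open Scope ring_scope.

Lemma is_length_irreducible (R : comNzRingType) (p : {poly R}) :
  poly_irreducible p -> is_length p 1.
Proof.
move=> p_irr; split=> //; exists [:: p]; split=> //; split; last exact: big_seq1.
by move=> g; rewrite inE => /eqP ->.
Qed.

Lemma is_length_mul (R : comNzRingType) (p q : {poly R}) k l :
  is_length p k -> is_length q l -> is_length (p * q) (k + l).
Proof.
move=> [k_gt0 [s [sk [s_irr sp]]]] [_ [t [tl [t_irr tq]]]].
split; first by rewrite addn_gt0 k_gt0.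
exists (s ++ t); rewrite size_cat big_cat sk tl sp tq; split=> //; split=> // g.
by rewrite mem_cat => /orP[/s_irr|/t_irr].
Qed.

Lemma X2_addC_mul_subC (R : comNzRingType) (a : R) :
  a * a = 0 -> ('X^2 + a%:P) * ('X^2 - a%:P) = 'X^4.
Proof.
by move=> aa0; rewrite mulrC -subr_sqr -exprM [a%:P ^+ 2]expr2 -polyCM aa0 polyC0 subr0.
Qed.

Section Ideal.
Variables (R : comNzRingType) (I : R -> Prop).
Hypothesis idealI : is_ideal I.

Lemma ideal0 : I 0. Proof. by move: idealI => []. Qed.

Lemma idealD a b : I a -> I b -> I (a + b).
Proof. by move: idealI => [_ [addI _]]; apply: addI. Qed.

Lemma idealMl r a : I a -> I (r * a).
Proof. by move: idealI => [_ [_ mulI]]; apply: mulI. Qed.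

Lemma idealMr r a : I a -> I (a * r). Proof. by rewrite mulrC; apply: idealMl. Qed.

Lemma idealN a : I a -> I (- a). Proof. by rewrite -mulN1r; apply: idealMl. Qed.

Lemma ideal_sum (J : Type) (r : seq J) (P : pred J) (F : J -> R) :
  (forall j, P j -> I (F j)) -> I (\sum_(j <- r | P j) F j).
Proof. by move=> IF; apply: big_ind => //; [exact: ideal0 | exact: idealD]. Qed.

Lemma ideal_coefM (g h : {poly R}) d :
  (forall j, (j <= d)%N -> I g`_j \/ I h`_(d - j)) -> I (g * h)`_d.
Proof.
move=> Igh; rewrite coefM; apply: ideal_sum => j _.
by case: (Igh j (leq_ord j)) => [/idealMr|/idealMl]; apply.
Qed.

End Ideal.

Section LocalRing.
Variables (R : comNzRingType) (m : R -> Prop).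
Hypothesis m_max : unique_maximal_ideal m.

Let m_ideal : is_ideal m := m_max.1.

Lemma notin_max1 : ~ m 1. Proof. by move: m_max => [_ []]. Qed.

Lemma notin_max_unit a : ~ m a -> exists b, b * a = 1.
Proof.
move=> a_notin; pose aR x := exists r, x = r * a.
have aR_ideal : is_ideal aR.
  split; first by exists 0; rewrite mul0r.
  split; first by move=> _ _ [r ->] [t ->]; exists (r + t); rewrite mulrDl.
  by move=> r _ [t ->]; exists (r * t); rewrite mulrA.
have [[b ->]|aR_proper] := pselect (aR 1); first by exists b.
have [_ [_ max_m]] := m_max.
by case: a_notin; apply: (max_m aR) => //; exists 1; rewrite mul1r.
Qed.

Lemma notin_maxM a b : ~ m a -> ~ m b -> ~ m (a * b).
Proof.
move=> a_notin /notin_max_unit[c cb1] mab; apply: a_notin.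
by rewrite -[a]mulr1 -cb1 mulrCA; apply: idealMl m_ideal _ _ mab.
Qed.

Lemma notin_maxDr a b : ~ m a -> m b -> ~ m (a + b).
Proof.
move=> a_notin mb mab; apply: a_notin.
by rewrite -(addrK b a); apply: idealD m_ideal _ _ mab _; apply: idealN.
Qed.

Lemma notin_max_coefM (g h : {poly R}) a b :
  ~ m g`_a -> ~ m h`_b ->
  (forall j, (j <= a + b)%N -> j != a -> m g`_j \/ m h`_(a + b - j)) ->
  ~ m (g * h)`_(a + b).
Proof.
move=> ga hb gh_max; have a_lt : (a < (a + b).+1)%N by lia.
rewrite coefM (bigD1 (Ordinal a_lt)) //= addKn.
apply: notin_maxDr; first exact: notin_maxM.
apply: ideal_sum => // j j_neq.
by case: (gh_max j (leq_ord j) j_neq) => [/(idealMr m_ideal)|/(idealMl m_ideal)].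
Qed.

(* The image of [p] in (R/m)[x] is a nonzero constant times x^a. *)
Definition monomial_mod (p : {poly R}) (a : nat) :=
  ~ m p`_a /\ forall i, i != a -> m p`_i.

Lemma monomial_mod_uniq p a b : monomial_mod p a -> monomial_mod p b -> a = b.
Proof. by move=> [pa _] [_ pb]; apply/eqP; apply: contra_notT pa => /pb. Qed.

Lemma monomial_mod_Xn n : monomial_mod 'X^n n.
Proof.
split=> [|i /negPf]; first by rewrite coefXn eqxx; apply: notin_max1.
by rewrite coefXn => ->; apply: ideal0.
Qed.

Lemma monomial_mod_mul g h a b :
  monomial_mod g a -> monomial_mod h b -> monomial_mod (g * h) (a + b).
Proof.
move=> [ga g_max] [hb h_max]; split.
  by apply: notin_max_coefM => // j _ ja; left; apply: g_max.
move=> i i_neq; apply: (ideal_coefM m_ideal) => j j_le.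
have [ja|ja] := eqVneq j a; last by left; apply: g_max.
by right; apply: h_max; apply: contraNneq i_neq; lia.
Qed.

Lemma monomial_mod_prod (s : seq {poly R}) (f : {poly R} -> nat) :
  {in s, forall g, monomial_mod g (f g)} ->
  monomial_mod (\prod_(g <- s) g) (\sum_(g <- s) f g).
Proof.
move=> s_shape; rewrite big_seq [X in monomial_mod _ X]big_seq.
apply: (big_ind2 monomial_mod) => [|g a h b|//]; first exact: monomial_mod_Xn 0.
exact: monomial_mod_mul.
Qed.

Lemma notin_max_coef_extremes (g : {poly R}) i : ~ m g`_i ->
  exists a a', [/\ ~ m g`_a, ~ m g`_a',
    forall j, (j < a)%N -> m g`_j & forall j, (a' < j)%N -> m g`_j].
Proof.
move=> gi; pose P j := ~~ `[< m g`_j >].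
have exP : exists j, P j by exists i; apply/asboolPn.
have ubP j : P j -> (j <= size g)%N.
  rewrite leqNgt; apply: contra => /ltnW g_le; apply/asboolP.
  by rewrite nth_default //; apply: ideal0.
case: (ex_minnP exP) => a /asboolPn ga a_min.
case: (ex_maxnP exP ubP) => a' /asboolPn ga' a'_max.
exists a, a'; split=> // j j_lt; apply/asboolP/negbNE.
  by apply: contraTN j_lt => /a_min; rewrite -leqNgt.
by apply: contraTN j_lt => /a'_max; rewrite -leqNgt.
Qed.

Lemma notin_max_coefM_lowest (g h : {poly R}) a b :
  ~ m g`_a -> ~ m h`_b ->
  (forall j, (j < a)%N -> m g`_j) -> (forall j, (j < b)%N -> m h`_j) ->
  ~ m (g * h)`_(a + b).
Proof.
move=> ga hb g_low h_low; apply: notin_max_coefM => // j j_le ja.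
by have [/g_low|a_le] := ltnP j a; [left | right; apply: h_low; lia].
Qed.

Lemma notin_max_coefM_highest (g h : {poly R}) a b :
  ~ m g`_a -> ~ m h`_b ->
  (forall j, (a < j)%N -> m g`_j) -> (forall j, (b < j)%N -> m h`_j) ->
  ~ m (g * h)`_(a + b).
Proof.
move=> ga hb g_high h_high; apply: notin_max_coefM => // j j_le ja.
by have [/g_high|le_a] := ltnP a j; [left | right; apply: h_high; lia].
Qed.

Lemma monomial_mod_factor (g h p : {poly R}) n :
  g * h = p -> monomial_mod p n -> exists a b, monomial_mod g a /\ monomial_mod h b.
Proof.
move=> gh_p [pn p_max].
have some_notin (q r : {poly R}) : q * r = p -> exists i, ~ m q`_i.
  move=> qr_p; apply/existsNP => q_max; apply: pn; rewrite -qr_p.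
  by apply: (ideal_coefM m_ideal) => j _; left.
have [i /notin_max_coef_extremes[a [a' [ga ga' g_low g_high]]]] := some_notin g h gh_p.
have [k /notin_max_coef_extremes[b [b' [hb hb' h_low h_high]]]] :=
  some_notin h g (etrans (mulrC h g) gh_p).
have ab_n : (a + b)%N = n.
  have [//|/p_max pm] := eqVneq (a + b)%N n; exfalso.
  by apply: (notin_max_coefM_lowest ga hb g_low h_low); rewrite gh_p.
have ab'_n : (a' + b')%N = n.
  have [//|/p_max pm] := eqVneq (a' + b')%N n; exfalso.
  by apply: (notin_max_coefM_highest ga' hb' g_high h_high); rewrite gh_p.
have a_le : (a <= a')%N by rewrite leqNgt; apply/negP => /g_low.
have b_le : (b <= b')%N by rewrite leqNgt; apply/negP => /h_low.
exists a, b; split; split=> // j j_neq.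
  by have [/g_low|a_le_j] := ltnP j a => //; apply: g_high; lia.
by have [/h_low|b_le_j] := ltnP j b => //; apply: h_high; lia.
Qed.

Lemma Xn_factor_shapes n (s : seq {poly R}) :
  \prod_(g <- s) g = 'X^n -> exists f, {in s, forall g, monomial_mod g (f g)}.
Proof.
move=> s_prod.
have shape_in g : exists a, g \in s -> monomial_mod g a.
  have [gs|gs] := boolP (g \in s); last by exists 0%N => gs_in; case/negP: gs.
  have gQ : g * \prod_(q <- rem g s) q = 'X^n by rewrite -s_prod (big_rem _ gs).
  by have [a [b [ga _]]] := monomial_mod_factor gQ (monomial_mod_Xn n); exists a.
by have [f f_shape] := choice shape_in; exists f.
Qed.

Section SquareZero.
Hypothesis m_sq0 : forall a b, m a -> m b -> a * b = 0.

Lemma poly_mul_eq0_max (p q : {poly R}) :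
  (forall i, m p`_i) -> (forall i, m q`_i) -> p * q = 0.
Proof.
move=> p_max q_max; apply/polyP => i; rewrite coefM coef0 big1 // => j _.
exact: m_sq0.
Qed.

Lemma monomial_mod_unitE p a : monomial_mod p a -> poly_unit p <-> a = 0%N.
Proof.
move=> pa; split=> [[q pq1]|a0].
  have [b [c [pb qc]]] := monomial_mod_factor pq1 (monomial_mod_Xn 0).
  have := monomial_mod_mul pb qc; rewrite pq1 => /(monomial_mod_uniq (monomial_mod_Xn 0)).
  by have := monomial_mod_uniq pa pb; lia.
subst a; case: pa => [p0 p_max]; have [c cp0] := notin_max_unit p0.
pose e := c%:P * p - 1.
have e_max i : m e`_i.
  rewrite coefB coefCM coef1; case: eqP => [->|/eqP i_neq0].
    by rewrite cp0 subrr; apply: ideal0.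
  by rewrite subr0; apply: idealMl => //; apply: p_max.
have ee0 : e * e = 0 := poly_mul_eq0_max e_max e_max.
exists (c%:P * (1 - e)); rewrite mulrA [p * _]mulrC -[c%:P * p](subrK 1) -/e addrC.
by rewrite mulrC -subr_sqr expr1n expr2 ee0 subr0.
Qed.

Lemma irreducible_monomial_modE p a : monomial_mod p a ->
  poly_irreducible p <-> (0 < a)%N /\ (a = 1%N \/ p`_0 != 0).
Proof.
move=> pa; split=> [[p_nunit p_irr]|[a_gt0 a1_or_p0]].
  have a_gt0 : (0 < a)%N.
    by rewrite lt0n; apply/eqP => a0; apply: p_nunit; apply/(monomial_mod_unitE pa).
  split=> //; have [p0|] := eqVneq p`_0 0; last by right.
  have /factor_theorem[q] : root p 0 by rewrite /root horner_coef0 p0.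
  rewrite subr0 => pqX.
  have [b [c [qb Xc]]] := monomial_mod_factor (esym pqX) pa.
  have c1 := monomial_mod_uniq (monomial_mod_Xn 1) Xc.
  have := monomial_mod_mul qb Xc; rewrite -pqX => /(monomial_mod_uniq pa) a_bc.
  case: (p_irr _ _ pqX) => [/(monomial_mod_unitE qb)|/(monomial_mod_unitE Xc)]; lia.
split=> [/(monomial_mod_unitE pa)|g h pgh]; first lia.
have [b [c [gb hc]]] := monomial_mod_factor (esym pgh) pa.
have := monomial_mod_mul gb hc; rewrite -pgh => /(monomial_mod_uniq pa) a_bc.
have [b0|b_gt0] := posnP b; first by left; apply/(monomial_mod_unitE gb).
have [c0|c_gt0] := posnP c; first by right; apply/(monomial_mod_unitE hc).
exfalso; case: a1_or_p0 => [|/eqP]; first lia.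
apply; rewrite pgh coef0M; apply: m_sq0; [apply: gb.2 | apply: hc.2];
  by rewrite eq_sym -lt0n.
Qed.

Lemma irreducible_X : poly_irreducible ('X : {poly R}).
Proof. by apply/(irreducible_monomial_modE (monomial_mod_Xn 1)); split=> //; left. Qed.

Lemma irreducible_X2_addC c : m c -> c != 0 -> poly_irreducible ('X^2 + c%:P).
Proof.
move=> mc c_neq0.
have X2c_shape : monomial_mod ('X^2 + c%:P) 2.
  split=> [|i i_neq2]; rewrite coefD coefXn coefC.
    by rewrite eqxx /= addr0; apply: notin_max1.
  by rewrite (negPf i_neq2) add0r; case: eqP => _ //; apply: ideal0.
apply/(irreducible_monomial_modE X2c_shape); split=> //; right.
by rewrite coefD coefXn coefC /= add0r.
Qed.

Definition monomial_mod_gap (K : nat) (p : {poly R}) (a : nat) :=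
  monomial_mod p a /\ forall d, (d + K < a)%N -> p`_d = 0.

Lemma monomial_mod_gap_mul K p q a b :
  monomial_mod_gap K p a -> monomial_mod_gap K q b -> monomial_mod_gap K (p * q) (a + b).
Proof.
move=> [pa p_gap] [qb q_gap]; split=> [|d d_lt]; first exact: monomial_mod_mul.
rewrite coefM big1 // => i _; have i_le := leq_ord i.
have [i_lt|i_ge] := ltnP (i + K) a; first by rewrite p_gap ?mul0r.
have [di_lt|di_ge] := ltnP (d - i + K) b; first by rewrite q_gap ?mulr0.
by apply: m_sq0; [apply: pa.2 | apply: qb.2]; apply/eqP; lia.
Qed.

Lemma monomial_mod_gap_prod K (s : seq {poly R}) (f : {poly R} -> nat) :
  {in s, forall g, monomial_mod g (f g) /\ (f g <= K)%N} ->
  monomial_mod_gap K (\prod_(g <- s) g) (\sum_(g <- s) f g).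
Proof.
move=> s_shape; rewrite big_seq [X in monomial_mod_gap _ _ X]big_seq.
apply: (big_ind2 (monomial_mod_gap K)) => [|g a h b|g gs].
- by split=> [|d]; [exact: monomial_mod_Xn 0 | rewrite ltn0].
- exact: monomial_mod_gap_mul.
- have [g_shape g_le] := s_shape g gs; split=> // d d_lt; exfalso; lia.
Qed.

Lemma coefM_gap_neq0 K (g q : {poly R}) b :
  monomial_mod g K.+1 -> g`_0 != 0 -> monomial_mod_gap K q b -> (g * q)`_b != 0.
Proof.
move=> [_ g_max] g0 [[qb q_max] q_gap]; rewrite coefM big_ord_recl big1 => [|i _].
  rewrite addr0 subn0; have [u uqb] := notin_max_unit qb.
  by apply: contraNneq g0 => gq0; apply/eqP; rewrite -[g`_0]mulr1 -uqb mulrCA gq0 mulr0.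
have i_lt := ltn_ord i; rewrite /= /bump leq0n.
have [iK|iK] := eqVneq (i : nat) K; first by rewrite q_gap ?mulr0 //; lia.
by apply: m_sq0; [apply: g_max | apply: q_max]; apply/eqP; lia.
Qed.

Lemma Xn_factor_max_repeated n (s : seq {poly R}) (f : {poly R} -> nat) g :
  {in s, forall q, monomial_mod q (f q)} -> \prod_(q <- s) q = 'X^n ->
  g \in s -> poly_irreducible g -> (1 < f g)%N ->
  has (fun q => f g <= f q)%N (rem g s).
Proof.
move=> s_shape s_prod gs g_irr fg_gt1.
rewrite -[has _ _]negbK -all_predC; apply/negP => /allP /= rem_lt.
have g_shape := s_shape g gs; set K := (f g).-1.
have fgK : f g = K.+1 by rewrite prednK // ltnW.
have g0 : g`_0 != 0.
  by case: ((irreducible_monomial_modE g_shape).1 g_irr) => _ [fg1|//]; lia.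
set Q := \prod_(q <- rem g s) q; set B := (\sum_(q <- rem g s) f q)%N.
have Q_gap : monomial_mod_gap K Q B.
  apply: monomial_mod_gap_prod => q q_rem; split; first exact/s_shape/(mem_rem q_rem).
  by have := rem_lt q q_rem; rewrite /= -ltnNge fgK ltnS.
have gQ : g * Q = 'X^n by rewrite -s_prod (big_rem _ gs).
have n_eq : n = (f g + B)%N.
  apply: monomial_mod_uniq (monomial_mod_Xn n) _.
  by rewrite -gQ; apply: monomial_mod_mul Q_gap.1.
have gK : monomial_mod g K.+1 by rewrite -fgK.
have := coefM_gap_neq0 gK g0 Q_gap; rewrite gQ coefXn.
have [B_n|B_neq] := eqVneq B n; first lia.
by rewrite mulr0n eqxx.
Qed.

Lemma length_Xn n k : is_length ('X^n : {poly R}) k ->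
  k = n \/ exists2 M, (1 < M)%N & ((2 * M + k <= n + 2) && (n <= k * M))%N.
Proof.
move=> [_ [s [<- [s_irr s_prod]]]].
have [f f_shape] := Xn_factor_shapes s_prod.
have <- : (\sum_(g <- s) f g)%N = n.
  by apply: monomial_mod_uniq (monomial_mod_Xn n); rewrite -s_prod; apply: monomial_mod_prod.
apply: sum_repeated_max => [|g gs].
  by apply/allP => g gs; case: ((irreducible_monomial_modE (f_shape g gs)).1 (s_irr g gs)).
exact: Xn_factor_max_repeated f_shape s_prod gs (s_irr g gs).
Qed.

Lemma is_length_Xn n : (0 < n)%N -> is_length ('X^n : {poly R}) n.
Proof.
case: n => // n _; elim: n => [|n IH]; first exact: is_length_irreducible irreducible_X.
by rewrite exprS; apply: (is_length_mul (is_length_irreducible irreducible_X)) IH.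
Qed.

Lemma is_length_X4 a : m a -> a != 0 -> is_length ('X^4 : {poly R}) 2.
Proof.
move=> ma a_neq0; rewrite -(X2_addC_mul_subC (m_sq0 ma ma)).
apply: (@is_length_mul _ _ _ 1 1); apply: is_length_irreducible.
  exact: irreducible_X2_addC.
by rewrite -polyCN; apply: irreducible_X2_addC; [exact: idealN | rewrite oppr_eq0].
Qed.

End SquareZero.
End LocalRing.

Theorem proposition4p6 (R : comNzRingType) (m : R -> Prop) :
  unique_maximal_ideal m ->
  artinian R ->
  (exists a, m a /\ a <> 0) ->
  (forall a b, m a -> m b -> a * b = 0) ->
  (forall k, is_length ('X : {poly R}) k <-> k = 1%N) /\
  (forall k, is_length ('X^2 : {poly R}) k <-> k = 2%N) /\
  (forall k, is_length ('X^3 : {poly R}) k <-> k = 3%N) /\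
  (forall k, is_length ('X^4 : {poly R}) k <-> k = 2%N \/ k = 4%N) /\
  (forall k, is_length ('X^5 : {poly R}) k <-> k = 3%N \/ k = 5%N).
Proof.
move=> m_max _ [a [ma /eqP a_neq0]] m_sq0.
have lengths := length_Xn m_max m_sq0.
have len_Xn := is_length_Xn m_max m_sq0.
have len_X4 := is_length_X4 m_max m_sq0 ma a_neq0.
have len_X5 : is_length ('X^5 : {poly R}) 3.
  by rewrite exprS; exact: is_length_mul (len_Xn 1%N isT) len_X4.
split; [change (forall k, is_length ('X^1 : {poly R}) k <-> k = 1%N)
      | split; [|split; [|split]]].
all: move=> k; split=> [/lengths[->|[M M_gt1 /andP[]]]|]; try nia.
- by move=> ->; apply: len_Xn.
- by move=> ->; apply: len_Xn.
- by move=> ->; apply: len_Xn.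
- by case=> ->; [apply: len_X4 | apply: len_Xn].
- by case=> ->; [apply: len_X5 | apply: len_Xn].
Qed.
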